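(* Let $\Omega_{\mathbf H}$ denote the restriction of the 3-form $\Omega(z_1,z_2,z_3)=\langle z_1\times z_2,z_3\rangle$ to the tangent bundle of $\mathbf H^{4,2}$, regarded as a complex-valued 3-form on the almost complex manifold $(\mathbf H^{4,2},\mathbf J)$ and decomposed by type as $\Omega_{\mathbf H}=\theta+\zeta+\bar\zeta+\bar\theta$ with $\theta$ of type $(3,0)$ and $\zeta$ of type $(2,1)$. Then $\theta$ is nowhere vanishing and $\zeta$ is identically zero. In particular $\theta$ trivializes the canonical bundle of $(\mathbf H^{4,2},\mathbf J)$.
   Context: Split octonions: $\mathbb H'$ has basis $1,j,\delta,\epsilon$ with $j^2=-1$, $\delta^2=\epsilon^2=1$, $j\delta=-\delta j=\epsilon$; $\mathbb O'=\mathbb H'\oplus\mathbb H'$ with $(x_1,y_1)\cdot(x_2,y_2)=(x_1x_2-\bar y_2y_1,\ y_2x_1+y_1\bar x_2)$, conjugation $(x,y)\mapsto(\bar x,-y)$, and $\mathrm{Im}(\mathbb O')$ the $(-1)$-eigenspace. For $z_1,z_2\in\mathrm{Im}(\mathbb O')$: $\langle z_1,z_2\rangle=\tfrac12(z_1z_2+\overline{z_1z_2})$, $z_1\times z_2=\tfrac12(z_1z_2-\overline{z_1z_2})$, $\mathbf q(z)=\langle z,z\rangle$ (signature $(4,3)$). $\mathbf H^{4,2}=\{z:\mathbf q(z)=-1\}$, $T_z\mathbf H^{4,2}=z^\perp$, and $\mathbf J_z(w)=z\times w$ is an almost complex structure on $\mathbf H^{4,2}$. *)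

From HB Require Import structures.
From mathcomp Require Import all_boot all_order all_algebra.
From mathcomp Require Import complex.
From mathcomp Require Import reals.
Set Implicit Arguments. Unset Strict Implicit. Unset Printing Implicit Defensive.
Import Order.TTheory GRing.Theory Num.Theory.
Local Open Scope ring_scope.

Section SplitOctonions.
Variable R : realType.

(* Split quaternions H' : a + b j + c delta + d eps *)
Record splitquat := SQ { sq1 : R; sqj : R; sqd : R; sqe : R }.

(* multiplication table: j^2=-1, d^2=e^2=1, jd=-dj=e,
   hence je=-d, ej=d, de=-j, ed=j *)
Definition sq_mul (x y : splitquat) : splitquat :=
  let: SQ a1 b1 c1 d1 := x in let: SQ a2 b2 c2 d2 := y in
  SQ (a1*a2 - b1*b2 + c1*c2 + d1*d2)
     (a1*b2 + b1*a2 - c1*d2 + d1*c2)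
     (a1*c2 + c1*a2 - b1*d2 + d1*b2)
     (a1*d2 + d1*a2 + b1*c2 - c1*b2).
Definition sq_add (x y : splitquat) : splitquat :=
  SQ (sq1 x + sq1 y) (sqj x + sqj y) (sqd x + sqd y) (sqe x + sqe y).
Definition sq_opp (x : splitquat) : splitquat :=
  SQ (- sq1 x) (- sqj x) (- sqd x) (- sqe x).
Definition sq_scale (r : R) (x : splitquat) : splitquat :=
  SQ (r * sq1 x) (r * sqj x) (r * sqd x) (r * sqe x).
Definition sq_conj (x : splitquat) : splitquat :=
  SQ (sq1 x) (- sqj x) (- sqd x) (- sqe x).
Definition sq_zero : splitquat := SQ 0 0 0 0.

Definition splitoct := (splitquat * splitquat)%type.

Definition so_mul (z1 z2 : splitoct) : splitoct :=
  let: (x1, y1) := z1 in let: (x2, y2) := z2 in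
  (sq_add (sq_mul x1 x2) (sq_opp (sq_mul (sq_conj y2) y1)),
   sq_add (sq_mul y2 x1) (sq_mul y1 (sq_conj x2))).
Definition so_add (z1 z2 : splitoct) : splitoct :=
  (sq_add z1.1 z2.1, sq_add z1.2 z2.2).
Definition so_opp (z : splitoct) : splitoct := (sq_opp z.1, sq_opp z.2).
Definition so_scale (r : R) (z : splitoct) : splitoct :=
  (sq_scale r z.1, sq_scale r z.2).
Definition so_conj (z : splitoct) : splitoct := (sq_conj z.1, sq_opp z.2).
Definition so_one : splitoct := (SQ 1 0 0 0, sq_zero).

Definition so_Im (z : splitoct) : Prop := so_conj z = so_opp z.

(* <z1,z2> = 1/2 (z1 z2 + conj(z1 z2)), an element of R.1 ; we record the
   real scalar s with <z1,z2> = s . 1 (its 1-coordinate). *)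
Definition so_inner_oct (z1 z2 : splitoct) : splitoct :=
  so_scale (2^-1) (so_add (so_mul z1 z2) (so_conj (so_mul z1 z2))).
Definition so_inner (z1 z2 : splitoct) : R := sq1 (so_inner_oct z1 z2).1.

Definition so_cross (z1 z2 : splitoct) : splitoct :=
  so_scale (2^-1) (so_add (so_mul z1 z2) (so_opp (so_conj (so_mul z1 z2)))).

Definition so_q (z : splitoct) : R := so_inner z z.

Definition Omega (z1 z2 z3 : splitoct) : R := so_inner (so_cross z1 z2) z3.

Definition H42 (z : splitoct) : Prop := so_Im z /\ so_q z = -1.

Definition tangentH (z w : splitoct) : Prop := so_Im w /\ so_inner z w = 0.

Definition Jz (z w : splitoct) : splitoct := so_cross z w.

(* Complexified tangent vectors u + i v are represented by pairs (u, v).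
   cext f is the C-trilinear extension of a real trilinear form f. *)
Definition cext (f : splitoct -> splitoct -> splitoct -> R)
  (X Y Z : splitoct * splitoct) : R[i] :=
  let: (a1, b1) := X in let: (a2, b2) := Y in let: (a3, b3) := Z in
  Complex (f a1 a2 a3 - f b1 b2 a3 - f b1 a2 b3 - f a1 b2 b3)
          (f b1 a2 a3 + f a1 b2 a3 + f a1 a2 b3 - f b1 b2 b3).

(* projections of a real tangent vector X onto T^{1,0} = {Jv = i v} and
   T^{0,1} = {Jv = - i v}:  pi10 X = (X - i J X)/2, pi01 X = (X + i J X)/2 *)
Definition pi10 (z X : splitoct) : splitoct * splitoct :=
  (so_scale (2^-1) X, so_scale (- 2^-1) (Jz z X)).
Definition pi01 (z X : splitoct) : splitoct * splitoct :=
  (so_scale (2^-1) X, so_scale (2^-1) (Jz z X)).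

Definition thetaH (z X Y Z : splitoct) : R[i] :=
  cext Omega (pi10 z X) (pi10 z Y) (pi10 z Z).
Definition zetaH (z X Y Z : splitoct) : R[i] :=
  cext Omega (pi10 z X) (pi10 z Y) (pi01 z Z)
  + cext Omega (pi10 z X) (pi01 z Y) (pi10 z Z)
  + cext Omega (pi01 z X) (pi10 z Y) (pi10 z Z).

End SplitOctonions.

From HB Require Import structures.
From mathcomp Require Import all_boot all_order all_algebra.
From mathcomp Require Import complex reals ring lra.
Set Implicit Arguments.
Unset Strict Implicit.
Import GRing.Theory Num.Theory.
Local Open Scope ring_scope.

(* On [T_z H^{4,2} = z^perp] the structure [J = z x _] satisfies
   [Omega(JX,Y,Z) = Omega(X,JY,Z) = Omega(X,Y,JZ)]: this follows from the
   octonion identity for [Omega(z x X, z x Y, Z)] and [J^2 = -1].  Hence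
   [Omega_H] has type (3,0)+(0,3), so [zeta = 0] and [Re theta = Omega_H / 2].
   To see that [Omega_H] does not vanish at [z], project the standard basis
   [e_i] of [Im O'] to [P e_i] in [z^perp] and weight by [q(e_i) = +-1]: the
   Parseval identity [sum_i q(e_i) <u, e_i>^2 = q(u)] and Lagrange's identity
   [q(X x Y) = <X,Y>^2 - q(X) q(Y)] evaluate
   [sum_(i,j,k) q(e_i) q(e_j) q(e_k) Omega(P e_i, P e_j, P e_k)^2] to [-24]. *)

Lemma exists_neq0_sumr {V : nmodType} {I : finType} {F : I -> V} :
  \sum_i F i != 0 -> exists i, F i != 0.
Proof.
move=> nz; have /existsP[i Fi] : [exists i, F i != 0] => //; last by exists i.
apply: contraR nz; rewrite negb_exists => /forallP F0.
by rewrite big1 // => i _; apply/eqP/negPn/F0.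
Qed.

Section ImaginarySplitOctonions.
Variable R : realType.
Implicit Types (r : R) (u v w x y z X Y Z : splitoct R).

Definition im_oct (a1 a2 a3 a4 a5 a6 a7 : R) : splitoct R :=
  (SQ 0 a1 a2 a3, SQ a4 a5 a6 a7).

Lemma so_ImP z : so_Im z ->
  exists a1 a2 a3 a4 a5 a6 a7, z = im_oct a1 a2 a3 a4 a5 a6 a7.
Proof.
case: z => [[a b c d] [e f g h]] []; rewrite /im_oct => /eqP.
rewrite -subr_eq0 opprK -mulr2n mulrn_eq0 /= => /eqP -> *.
by exists b, c, d, e, f, g, h.
Qed.

Lemma so_Im_im_oct (a1 a2 a3 a4 a5 a6 a7 : R) : so_Im (im_oct a1 a2 a3 a4 a5 a6 a7).
Proof. by rewrite /so_Im /im_oct /so_conj /so_opp /sq_conj /sq_opp /= oppr0. Qed.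

Lemma so_cross_im_oct (a1 a2 a3 a4 a5 a6 a7 b1 b2 b3 b4 b5 b6 b7 : R) :
  so_cross (im_oct a1 a2 a3 a4 a5 a6 a7) (im_oct b1 b2 b3 b4 b5 b6 b7) =
  im_oct (a4*b5 - a5*b4 + a6*b7 - a7*b6 + a3*b2 - a2*b3)
         (a4*b6 - a6*b4 + a5*b7 - a7*b5 + a3*b1 - a1*b3)
         (a4*b7 - a7*b4 + a6*b5 - a5*b6 + a1*b2 - a2*b1)
         (a5*b1 - a1*b5 + a2*b6 - a6*b2 + a3*b7 - a7*b3)
         (a1*b4 - a4*b1 + a6*b3 - a3*b6 + a2*b7 - a7*b2)
         (a2*b4 - a4*b2 + a5*b3 - a3*b5 + a1*b7 - a7*b1)
         (a3*b4 - a4*b3 + a2*b5 - a5*b2 + a6*b1 - a1*b6).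
Proof.
rewrite /so_cross /so_scale /so_add /so_opp /so_conj /sq_scale /sq_add /sq_opp.
by rewrite /sq_conj /im_oct /=; congr (SQ _ _ _ _, SQ _ _ _ _); field.
Qed.

Lemma so_inner_im_oct (a1 a2 a3 a4 a5 a6 a7 b1 b2 b3 b4 b5 b6 b7 : R) :
  so_inner (im_oct a1 a2 a3 a4 a5 a6 a7) (im_oct b1 b2 b3 b4 b5 b6 b7) =
  - a1*b1 + a2*b2 + a3*b3 - a4*b4 - a5*b5 + a6*b6 + a7*b7.
Proof.
rewrite /so_inner /so_inner_oct /so_scale /so_add /so_conj /sq_scale /sq_add.
by rewrite /sq_conj /im_oct /=; field.
Qed.

Lemma so_scale_im_oct r (a1 a2 a3 a4 a5 a6 a7 : R) :
  so_scale r (im_oct a1 a2 a3 a4 a5 a6 a7) =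
  im_oct (r*a1) (r*a2) (r*a3) (r*a4) (r*a5) (r*a6) (r*a7).
Proof. by rewrite /so_scale /sq_scale /im_oct /= mulr0. Qed.

Lemma so_add_im_oct (a1 a2 a3 a4 a5 a6 a7 b1 b2 b3 b4 b5 b6 b7 : R) :
  so_add (im_oct a1 a2 a3 a4 a5 a6 a7) (im_oct b1 b2 b3 b4 b5 b6 b7) =
  im_oct (a1+b1) (a2+b2) (a3+b3) (a4+b4) (a5+b5) (a6+b6) (a7+b7).
Proof. by rewrite /so_add /sq_add /im_oct /= addr0. Qed.

(* The orthogonal projection onto [z^perp] when [so_q z = -1]. *)
Definition tproj z w : splitoct R := so_add w (so_scale (so_inner z w) z).

Definition so_unit (i : 'I_7) : splitoct R :=
  let c k := (i == k :> nat)%:R in im_oct (c 0) (c 1) (c 2) (c 3) (c 4) (c 5) (c 6).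

Ltac im_coords :=
  repeat match goal with
  | |- so_Im _ -> _ => move=> /so_ImP[? [? [? [? [? [? [? ->]]]]]]]
  end;
  rewrite /Omega /so_q /Jz /tproj
    ?(so_cross_im_oct, so_inner_im_oct, so_scale_im_oct, so_add_im_oct).

Lemma so_Im_cross x y : so_Im x -> so_Im y -> so_Im (so_cross x y).
Proof. by im_coords; apply: so_Im_im_oct. Qed.

Lemma so_Im_tproj z w : so_Im z -> so_Im w -> so_Im (tproj z w).
Proof. by im_coords; apply: so_Im_im_oct. Qed.

Lemma so_Im_scale r x : so_Im x -> so_Im (so_scale r x).
Proof. by im_coords; apply: so_Im_im_oct. Qed.

Lemma so_inner_crossl x y : so_Im x -> so_Im y -> so_inner x (so_cross x y) = 0.
Proof. by im_coords; ring. Qed.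

Lemma so_inner_cross x y v : so_Im x -> so_Im y -> so_Im v ->
  so_inner x (so_cross y v) = so_inner (so_cross x y) v.
Proof. by im_coords; ring. Qed.

Lemma so_q_cross x y : so_Im x -> so_Im y ->
  so_q (so_cross x y) = so_inner x y ^+ 2 - so_q x * so_q y.
Proof. by im_coords; ring. Qed.

Lemma so_inner_tproj z u w : so_Im z -> so_Im u -> so_Im w ->
  so_inner u (tproj z w) = so_inner (tproj z u) w.
Proof. by im_coords; ring. Qed.

Lemma so_q_tproj z u : so_Im z -> so_Im u ->
  so_q (tproj z u) = so_q u + (2 + so_q z) * so_inner z u ^+ 2.
Proof. by im_coords; ring. Qed.

Lemma so_inner_tprojr z w : so_Im z -> so_Im w ->
  so_inner z (tproj z w) = (1 + so_q z) * so_inner z w.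
Proof. by im_coords; ring. Qed.

Lemma Omega_cycle x y v : so_Im x -> so_Im y -> so_Im v ->
  Omega x y v = Omega y v x.
Proof. by im_coords; ring. Qed.

Lemma Omega_scalel r x y v : so_Im x -> so_Im y -> so_Im v ->
  Omega (so_scale r x) y v = r * Omega x y v.
Proof. by im_coords; ring. Qed.

Lemma Omega_scalem r x y v : so_Im x -> so_Im y -> so_Im v ->
  Omega x (so_scale r y) v = r * Omega x y v.
Proof. by im_coords; ring. Qed.

Lemma Omega_scaler r x y v : so_Im x -> so_Im y -> so_Im v ->
  Omega x y (so_scale r v) = r * Omega x y v.
Proof. by im_coords; ring. Qed.

Lemma Omega_cross_cross z x y v : so_Im z -> so_Im x -> so_Im y -> so_Im v ->
  Omega x (so_cross z (so_cross z y)) v =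
  so_q z * Omega x y v - so_inner z y * Omega x z v.
Proof. by im_coords; ring. Qed.

Lemma Omega_cross2 z X Y Z : so_Im z -> so_Im X -> so_Im Y -> so_Im Z ->
  Omega (so_cross z X) (so_cross z Y) Z =
  so_q z * Omega X Y Z - so_inner z X * Omega z Y Z
  - so_inner z Y * Omega X z Z - 2 * so_inner z Z * Omega X Y z.
Proof. by im_coords; ring. Qed.

Lemma so_Im_unit i : so_Im (so_unit i).
Proof. exact: so_Im_im_oct. Qed.

Lemma sum_so_unit_inner2 u : so_Im u ->
  \sum_(i < 7) so_q (so_unit i) * so_inner u (so_unit i) ^+ 2 = so_q u.
Proof.
by im_coords; rewrite !big_ord_recl big_ord0 /so_unit /= !so_inner_im_oct; ring.
Qed.

Lemma sum_so_unit_q_tproj z : so_Im z ->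
  \sum_(i < 7) so_q (so_unit i) * so_q (tproj z (so_unit i)) =
  7 + (2 + so_q z) * so_q z.
Proof.
im_coords; rewrite !big_ord_recl big_ord0 /so_unit /=.
by rewrite ?(so_add_im_oct, so_scale_im_oct, so_inner_im_oct); ring.
Qed.

Lemma cext_Omega_scale (s1 t1 s2 t2 s3 t3 : R) x1 y1 x2 y2 x3 y3 :
  so_Im x1 -> so_Im y1 -> so_Im x2 -> so_Im y2 -> so_Im x3 -> so_Im y3 ->
  cext (@Omega R) (so_scale s1 x1, so_scale t1 y1) (so_scale s2 x2, so_scale t2 y2)
    (so_scale s3 x3, so_scale t3 y3) =
  Complex (s1 * s2 * s3 * Omega x1 x2 x3 - t1 * t2 * s3 * Omega y1 y2 x3
           - t1 * s2 * t3 * Omega y1 x2 y3 - s1 * t2 * t3 * Omega x1 y2 y3)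
          (t1 * s2 * s3 * Omega y1 x2 x3 + s1 * t2 * s3 * Omega x1 y2 x3
           + s1 * s2 * t3 * Omega x1 x2 y3 - t1 * t2 * t3 * Omega y1 y2 y3).
Proof.
move=> *; rewrite /cext.
rewrite !Omega_scalel //; try by apply: so_Im_scale.
rewrite !Omega_scalem //; try by apply: so_Im_scale.
by rewrite !Omega_scaler //; congr Complex; ring.
Qed.

End ImaginarySplitOctonions.

Section TangentSpace.
Variables (R : realType) (z : splitoct R).
Hypotheses (Iz : so_Im z) (qz : so_q z = -1).
Implicit Types (u v w X Y Z : splitoct R).

Lemma tangent_Jz X : tangentH z X -> tangentH z (Jz z X).
Proof. by case=> IX _; split; [exact: so_Im_cross | exact: so_inner_crossl]. Qed.

Lemma tangent_tproj w : so_Im w -> tangentH z (tproj z w).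
Proof.
by move=> Iw; split; [exact: so_Im_tproj | rewrite so_inner_tprojr // qz addrN mul0r].
Qed.

Lemma so_q_Jz X : tangentH z X -> so_q (Jz z X) = so_q X.
Proof. by case=> IX zX; rewrite /Jz so_q_cross // zX qz; ring. Qed.

Lemma sum_inner2_tproj u : so_Im u ->
  \sum_(i < 7) so_q (so_unit R i) * so_inner u (tproj z (so_unit R i)) ^+ 2 =
  so_q u + so_inner z u ^+ 2.
Proof.
move=> Iu; under eq_bigr => i _ do rewrite (so_inner_tproj Iz Iu (so_Im_unit R i)).
rewrite sum_so_unit_inner2; last exact: so_Im_tproj.
by rewrite so_q_tproj // qz; ring.
Qed.

Lemma sum_Omega2_tproj X Y : tangentH z X -> tangentH z Y ->
  \sum_(i < 7) so_q (so_unit R i) * Omega X Y (tproj z (so_unit R i)) ^+ 2 =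
  so_inner X Y ^+ 2 - so_q X * so_q Y + so_inner (Jz z X) Y ^+ 2.
Proof.
move=> [IX _] [IY _]; rewrite sum_inner2_tproj; last exact: so_Im_cross.
by rewrite so_q_cross // so_inner_cross.
Qed.

Lemma sum_frame_tproj X : tangentH z X ->
  \sum_(i < 7) so_q (so_unit R i) *
    (so_inner X (tproj z (so_unit R i)) ^+ 2
     - so_q X * so_q (tproj z (so_unit R i))
     + so_inner (Jz z X) (tproj z (so_unit R i)) ^+ 2) = - 4 * so_q X.
Proof.
move=> tX; have [IX zX] := tX; have [IJX zJX] := tangent_Jz tX.
transitivity (\sum_(i < 7) so_q (so_unit R i) * so_inner X (tproj z (so_unit R i)) ^+ 2
  - so_q X * \sum_(i < 7) so_q (so_unit R i) * so_q (tproj z (so_unit R i))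
  + \sum_(i < 7) so_q (so_unit R i) * so_inner (Jz z X) (tproj z (so_unit R i)) ^+ 2).
  by rewrite mulr_sumr -sumrB -big_split; apply: eq_bigr => i _ /=; ring.
by rewrite !sum_inner2_tproj // sum_so_unit_q_tproj // so_q_Jz // zX zJX qz; ring.
Qed.

Lemma sum_frame_Omega2 :
  \sum_(i < 7) so_q (so_unit R i) * \sum_(j < 7) so_q (so_unit R j) *
    \sum_(k < 7) so_q (so_unit R k) *
      Omega (tproj z (so_unit R i)) (tproj z (so_unit R j)) (tproj z (so_unit R k)) ^+ 2
  = -24.
Proof.
pose tu i := tangent_tproj (so_Im_unit R i).
under eq_bigr => i _ do under eq_bigr => j _ do rewrite (sum_Omega2_tproj (tu i) (tu j)).
under eq_bigr => i _ do rewrite (sum_frame_tproj (tu i)) mulrCA.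
by rewrite -mulr_sumr sum_so_unit_q_tproj // qz; ring.
Qed.

Lemma exists_tangent_Omega_neq0 : exists X Y Z,
  [/\ tangentH z X, tangentH z Y, tangentH z Z & Omega X Y Z != 0].
Proof.
have : -24 != 0 :> R by rewrite oppr_eq0 pnatr_eq0.
rewrite -sum_frame_Omega2 => nz; case: (exists_neq0_sumr nz) => i.
rewrite mulf_eq0 negb_or => /andP[_ nz_i]; case: (exists_neq0_sumr nz_i) => j.
rewrite mulf_eq0 negb_or => /andP[_ nz_j]; case: (exists_neq0_sumr nz_j) => k.
rewrite mulf_eq0 negb_or sqrf_eq0 => /andP[_ nz_k].
exists (tproj z (so_unit R i)), (tproj z (so_unit R j)), (tproj z (so_unit R k)).
by split=> //; apply/tangent_tproj/so_Im_unit.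
Qed.

Lemma Omega_JJm u X v : so_Im u -> tangentH z X -> so_Im v ->
  Omega u (Jz z (Jz z X)) v = - Omega u X v.
Proof. by move=> Iu [IX zX] Iv; rewrite /Jz Omega_cross_cross // zX qz; ring. Qed.

Lemma Omega_Jlm X Y Z : tangentH z X -> tangentH z Y -> tangentH z Z ->
  Omega (Jz z X) Y Z = Omega X (Jz z Y) Z.
Proof.
move=> tX tY tZ; have [IX zX] := tX; have [IY _] := tY; have [IZ zZ] := tZ.
have [IJY zJY] := tangent_Jz tY.
have := Omega_cross2 Iz IX IJY IZ; rewrite qz zX zJY zZ.
by rewrite (Omega_JJm (so_Im_cross Iz IX)) //; lra.
Qed.

Lemma Omega_Jmr X Y Z : tangentH z X -> tangentH z Y -> tangentH z Z ->
  Omega X (Jz z Y) Z = Omega X Y (Jz z Z).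
Proof.
move=> tX tY tZ; have [IX _] := tX; have [IY _] := tY; have [IZ _] := tZ.
have [IJY _] := tangent_Jz tY; have [IJZ _] := tangent_Jz tZ.
by rewrite Omega_cycle // Omega_Jlm // -Omega_cycle.
Qed.

Section TangentTriple.
Variables X Y Z : splitoct R.
Hypotheses (tX : tangentH z X) (tY : tangentH z Y) (tZ : tangentH z Z).

Let IX := proj1 tX.
Let IY := proj1 tY.
Let IZ := proj1 tZ.
Let tJX := tangent_Jz tX.
Let tJY := tangent_Jz tY.
Let tJZ := tangent_Jz tZ.
Let IJX := proj1 tJX.
Let IJY := proj1 tJY.
Let IJZ := proj1 tJZ.

Lemma Omega_JJ :
  [/\ Omega (Jz z X) (Jz z Y) Z = - Omega X Y Z,
      Omega (Jz z X) Y (Jz z Z) = - Omega X Y Z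
    & Omega X (Jz z Y) (Jz z Z) = - Omega X Y Z].
Proof.
have JJmr : Omega X (Jz z Y) (Jz z Z) = - Omega X Y Z.
  by rewrite -Omega_Jmr // Omega_JJm.
split=> //.
- by rewrite Omega_Jlm // Omega_JJm.
- by rewrite Omega_Jlm.
Qed.

Lemma Omega_J :
  [/\ Omega X (Jz z Y) Z = Omega (Jz z X) Y Z,
      Omega X Y (Jz z Z) = Omega (Jz z X) Y Z
    & Omega (Jz z X) (Jz z Y) (Jz z Z) = - Omega (Jz z X) Y Z].
Proof.
split.
- by rewrite Omega_Jlm.
- by rewrite -Omega_Jmr // Omega_Jlm.
- by rewrite Omega_Jlm // Omega_JJm // -Omega_Jmr // Omega_Jlm.
Qed.

Lemma thetaH_Re : complex.Re (thetaH z X Y Z) = Omega X Y Z / 2.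
Proof.
have [JJ1 JJ2 JJ3] := Omega_JJ.
by rewrite /thetaH /pi10 cext_Omega_scale //= JJ1 JJ2 JJ3; field.
Qed.

Lemma zetaH_eq0 : zetaH z X Y Z = 0.
Proof.
have [JJ1 JJ2 JJ3] := Omega_JJ; have [J2 J3 JJJ] := Omega_J.
rewrite /zetaH /pi10 /pi01 !cext_Omega_scale // JJ1 JJ2 JJ3 J2 J3 JJJ.
by apply/eqP; rewrite eq_complex /=; apply/andP; split; apply/eqP; field.
Qed.

End TangentTriple.

End TangentSpace.

Theorem lemma3p4 (R : realType) :
  (forall z : splitoct R, H42 z ->
     exists X Y Z : splitoct R,
       [/\ tangentH z X, tangentH z Y, tangentH z Z & thetaH z X Y Z != 0])
  /\
  (forall z : splitoct R, H42 z ->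
     forall X Y Z : splitoct R,
       tangentH z X -> tangentH z Y -> tangentH z Z -> zetaH z X Y Z = 0).
Proof.
split=> [z [Iz qz] | z [Iz qz] X Y Z tX tY tZ]; last exact: zetaH_eq0.
have [X [Y [Z [tX tY tZ nz]]]] := exists_tangent_Omega_neq0 Iz qz.
exists X, Y, Z; split=> //; apply: contraNneq nz => theta0.
by have := thetaH_Re Iz qz tX tY tZ; rewrite theta0 /=; lra.
Qed.
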